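(* Let $n>2k$ be integers and let $A\in\mathscr F_k^5$ satisfy, for all $\alpha\in\mathscr I_{k-1}^5$, $$(n+2k-4\alpha_3-4)A_{\alpha+\vec e_3}=(n+2k-4\alpha_4-4)A_{\alpha+\vec e_4},$$ $$(n+2k-4\alpha_5-4)A_{\alpha+\vec e_5}=(n+2k-4\alpha_1-4)A_{\alpha+\vec e_1},$$ $$(n+2k-4\alpha_3-4)A_{\alpha+\vec e_3}=(n+2k-4\alpha_1-4)A_{\alpha+\vec e_1}-4(\alpha_1-\alpha_3-\alpha_4+\alpha_5)A_{\alpha+\vec e_2}.$$ Let $\alpha\in\mathscr I_k^5$ with $\alpha_4=\alpha_5$. Then $A_\alpha=A_{\alpha'}$, where $\alpha':=(\alpha_3,\alpha_2,\alpha_1,\alpha_5,\alpha_4)$.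
   Context: Notation: $\mathscr I_k^\ell:=\{\alpha\in\mathbb N_0^\ell:\alpha_1+\cdots+\alpha_\ell=k\}$; $\mathscr F_k^\ell$ is the real vector space of functions $A:\mathscr I_k^\ell\to\mathbb R$, $A_\alpha:=A(\alpha)$; $\vec e_j\in\mathbb N_0^\ell$ is the tuple with $1$ in slot $j$ and $0$ elsewhere. *)

From Stdlib Require Import Reals.
Open Scope R_scope.

(* A multi-index alpha in N_0^5 is represented by its five components;
   an element A of F_k^5 is represented by a function of five naturals
   A a1 a2 a3 a4 a5 : R, of which only the values on I_k^5
   (a1+...+a5 = k) are ever used. *)
Definition F5 := nat -> nat -> nat -> nat -> nat -> R.

Definition coef (n k a : nat) : R :=
  INR n + 2 * INR k - 4 * INR a - 4.

(* Rescale A by the partial products of the coefficients: D(α) := A(α) ∏_i ∏_{b < α_i} c(b).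
   The first two relations become the shift invariances D(β+e3) = D(β+e4) and
   D(β+e5) = D(β+e1), and the third becomes
   D(β+e3) = D(β+e1) - (4 / c(β2)) (β1 - β3 - β4 + β5) D(β+e2).
   The difference E(α) := D(α) - D(α') obeys the same three relations, because the
   correction term changes sign under α ↦ α'.  By downward induction on α2: once E
   vanishes on the level α2 + 1, on the level α2 it is invariant under moving units
   among the slots 1, 3, 4, 5, so it depends on α2 alone; since E(α') = -E(α) and α'
   has the same α2, E vanishes.  For n > 2k the coefficients c(b), b < k, are
   positive, so the rescaling can be undone. *)
From Stdlib Require Import Reals Lra Lia.
Open Scope R_scope.

Definition swap5 (D : F5) : F5 := fun a1 a2 a3 a4 a5 => D a3 a2 a1 a5 a4.

Section SwapSymmetry.

Variables (k : nat) (D : F5) (w : nat -> R).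

Hypothesis D_shift34 : forall b1 b2 b3 b4 b5, (b1 + b2 + b3 + b4 + b5 + 1 = k)%nat ->
  D b1 b2 (S b3) b4 b5 = D b1 b2 b3 (S b4) b5.
Hypothesis D_shift51 : forall b1 b2 b3 b4 b5, (b1 + b2 + b3 + b4 + b5 + 1 = k)%nat ->
  D b1 b2 b3 b4 (S b5) = D (S b1) b2 b3 b4 b5.
Hypothesis D_shift31 : forall b1 b2 b3 b4 b5, (b1 + b2 + b3 + b4 + b5 + 1 = k)%nat ->
  D b1 b2 (S b3) b4 b5 =
    D (S b1) b2 b3 b4 b5 - w b2 * (INR b1 - INR b3 - INR b4 + INR b5) * D b1 (S b2) b3 b4 b5.

Let E a1 a2 a3 a4 a5 := D a1 a2 a3 a4 a5 - swap5 D a1 a2 a3 a4 a5.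

Lemma E_swap a1 a2 a3 a4 a5 : E a3 a2 a1 a5 a4 = - E a1 a2 a3 a4 a5.
Proof. unfold E, swap5; ring. Qed.

Lemma E_shift34 b1 b2 b3 b4 b5 : (b1 + b2 + b3 + b4 + b5 + 1 = k)%nat ->
  E b1 b2 (S b3) b4 b5 = E b1 b2 b3 (S b4) b5.
Proof.
  intro Hs; unfold E, swap5.
  rewrite D_shift34, (D_shift51 b3 b2 b1 b5 b4) by lia; reflexivity.
Qed.

Lemma E_shift51 b1 b2 b3 b4 b5 : (b1 + b2 + b3 + b4 + b5 + 1 = k)%nat ->
  E b1 b2 b3 b4 (S b5) = E (S b1) b2 b3 b4 b5.
Proof.
  intro Hs; unfold E, swap5.
  rewrite D_shift51, (D_shift34 b3 b2 b1 b5 b4) by lia; reflexivity.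
Qed.

Lemma E_shift31 b1 b2 b3 b4 b5 : (b1 + b2 + b3 + b4 + b5 + 1 = k)%nat ->
  E b1 b2 (S b3) b4 b5 =
    E (S b1) b2 b3 b4 b5 - w b2 * (INR b1 - INR b3 - INR b4 + INR b5) * E b1 (S b2) b3 b4 b5.
Proof.
  intro Hs; unfold E, swap5.
  rewrite D_shift31, (D_shift31 b3 b2 b1 b5 b4) by lia; ring.
Qed.

Section Level.

Variable m : nat.
Hypothesis E_next_level0 : forall a1 a3 a4 a5, (a1 + S m + a3 + a4 + a5 = k)%nat ->
  E a1 (S m) a3 a4 a5 = 0.

Lemma E_shift31_level b1 b3 b4 b5 : (b1 + m + b3 + b4 + b5 + 1 = k)%nat ->
  E b1 m (S b3) b4 b5 = E (S b1) m b3 b4 b5.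
Proof.
  intro Hs; rewrite E_shift31, E_next_level0 by lia; ring.
Qed.

Lemma E_level_normal_form a1 a3 a4 a5 : (a1 + m + a3 + a4 + a5 = k)%nat ->
  E a1 m a3 a4 a5 = E (a1 + a3 + a4 + a5) m 0 0 0.
Proof.
  revert a1 a3 a4; induction a5 as [|a5 IH5]; intros a1 a3 a4 Hs.
  2:{ rewrite E_shift51, IH5 by lia; f_equal; lia. }
  revert a1 a3 Hs; induction a4 as [|a4 IH4]; intros a1 a3 Hs.
  2:{ rewrite <- E_shift34, IH4 by lia; f_equal; lia. }
  revert a1 Hs; induction a3 as [|a3 IH3]; intros a1 Hs.
  2:{ rewrite E_shift31_level, IH3 by lia; f_equal; lia. }
  f_equal; lia.
Qed.

Lemma E_level0 a1 a3 a4 a5 : (a1 + m + a3 + a4 + a5 = k)%nat -> E a1 m a3 a4 a5 = 0.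
Proof.
  intro Hs.
  pose proof (E_level_normal_form a1 a3 a4 a5 Hs) as Hnf.
  pose proof (E_level_normal_form a3 a1 a5 a4 ltac:(lia)) as Hnf'.
  rewrite E_swap in Hnf'.
  replace (a3 + a1 + a5 + a4)%nat with (a1 + a3 + a4 + a5)%nat in Hnf' by lia.
  lra.
Qed.

End Level.

Lemma swap5_eq a1 a2 a3 a4 a5 : (a1 + a2 + a3 + a4 + a5 = k)%nat ->
  D a1 a2 a3 a4 a5 = swap5 D a1 a2 a3 a4 a5.
Proof.
  intro Hs.
  enough (Hlevel : forall j m, (m + j = k)%nat ->
    forall a1 a3 a4 a5, (a1 + m + a3 + a4 + a5 = k)%nat -> E a1 m a3 a4 a5 = 0).
  { pose proof (Hlevel (k - a2)%nat a2 ltac:(lia) a1 a3 a4 a5 ltac:(lia)) as H0.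
    unfold E in H0; lra. }
  induction j as [|j IH]; intros m Hm b1 b3 b4 b5 Hs'.
  - assert (b1 = 0 /\ b3 = 0 /\ b4 = 0 /\ b5 = 0)%nat as [-> [-> [-> ->]]] by lia.
    unfold E, swap5; ring.
  - apply E_level0; [|lia]. apply IH; lia.
Qed.

End SwapSymmetry.

Section Rescaling.

Variables (k : nat) (c : nat -> R) (A : F5).

Hypothesis c_neq0 : forall b, (b < k)%nat -> c b <> 0.
Hypothesis A_rel : forall b1 b2 b3 b4 b5, (b1 + b2 + b3 + b4 + b5 + 1 = k)%nat ->
  c b3 * A b1 b2 (S b3) b4 b5 = c b4 * A b1 b2 b3 (S b4) b5 /\
  c b5 * A b1 b2 b3 b4 (S b5) = c b1 * A (S b1) b2 b3 b4 b5 /\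
  c b3 * A b1 b2 (S b3) b4 b5 =
    c b1 * A (S b1) b2 b3 b4 b5 - 4 * (INR b1 - INR b3 - INR b4 + INR b5) * A b1 (S b2) b3 b4 b5.

Fixpoint cprod (a : nat) : R :=
  match a with 0%nat => 1 | S b => cprod b * c b end.

Definition mass a1 a2 a3 a4 a5 := cprod a1 * cprod a2 * cprod a3 * cprod a4 * cprod a5.

Definition rescale : F5 := fun a1 a2 a3 a4 a5 => A a1 a2 a3 a4 a5 * mass a1 a2 a3 a4 a5.

Lemma cprod_neq0 a : (a <= k)%nat -> cprod a <> 0.
Proof.
  induction a as [|a IH]; intro Ha; simpl.
  - lra.
  - apply Rmult_integral_contrapositive; split; [apply IH | apply c_neq0]; lia.
Qed.

Lemma mass_neq0 a1 a2 a3 a4 a5 : (a1 + a2 + a3 + a4 + a5 = k)%nat ->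
  mass a1 a2 a3 a4 a5 <> 0.
Proof.
  intro Hs; unfold mass.
  repeat apply Rmult_integral_contrapositive_currified; apply cprod_neq0; lia.
Qed.

Lemma rescale_succ1 b1 b2 b3 b4 b5 :
  rescale (S b1) b2 b3 b4 b5 = mass b1 b2 b3 b4 b5 * (c b1 * A (S b1) b2 b3 b4 b5).
Proof. unfold rescale, mass; simpl; ring. Qed.

Lemma rescale_succ2 b1 b2 b3 b4 b5 :
  rescale b1 (S b2) b3 b4 b5 = mass b1 b2 b3 b4 b5 * (c b2 * A b1 (S b2) b3 b4 b5).
Proof. unfold rescale, mass; simpl; ring. Qed.

Lemma rescale_succ3 b1 b2 b3 b4 b5 :
  rescale b1 b2 (S b3) b4 b5 = mass b1 b2 b3 b4 b5 * (c b3 * A b1 b2 (S b3) b4 b5).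
Proof. unfold rescale, mass; simpl; ring. Qed.

Lemma rescale_succ4 b1 b2 b3 b4 b5 :
  rescale b1 b2 b3 (S b4) b5 = mass b1 b2 b3 b4 b5 * (c b4 * A b1 b2 b3 (S b4) b5).
Proof. unfold rescale, mass; simpl; ring. Qed.

Lemma rescale_succ5 b1 b2 b3 b4 b5 :
  rescale b1 b2 b3 b4 (S b5) = mass b1 b2 b3 b4 b5 * (c b5 * A b1 b2 b3 b4 (S b5)).
Proof. unfold rescale, mass; simpl; ring. Qed.

Lemma rescale_shift34 b1 b2 b3 b4 b5 : (b1 + b2 + b3 + b4 + b5 + 1 = k)%nat ->
  rescale b1 b2 (S b3) b4 b5 = rescale b1 b2 b3 (S b4) b5.
Proof.
  intro Hs; destruct (A_rel _ _ _ _ _ Hs) as [H34 _].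
  rewrite rescale_succ3, rescale_succ4, H34; reflexivity.
Qed.

Lemma rescale_shift51 b1 b2 b3 b4 b5 : (b1 + b2 + b3 + b4 + b5 + 1 = k)%nat ->
  rescale b1 b2 b3 b4 (S b5) = rescale (S b1) b2 b3 b4 b5.
Proof.
  intro Hs; destruct (A_rel _ _ _ _ _ Hs) as [_ [H51 _]].
  rewrite rescale_succ5, rescale_succ1, H51; reflexivity.
Qed.

Lemma rescale_shift31 b1 b2 b3 b4 b5 : (b1 + b2 + b3 + b4 + b5 + 1 = k)%nat ->
  rescale b1 b2 (S b3) b4 b5 =
    rescale (S b1) b2 b3 b4 b5
    - 4 / c b2 * (INR b1 - INR b3 - INR b4 + INR b5) * rescale b1 (S b2) b3 b4 b5.
Proof.
  intro Hs; destruct (A_rel _ _ _ _ _ Hs) as [_ [_ H31]].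
  pose proof (c_neq0 b2 ltac:(lia)) as Hc2.
  rewrite rescale_succ3, rescale_succ1, rescale_succ2, H31; field; exact Hc2.
Qed.

Lemma swap5_eq_of_rel a1 a2 a3 a4 a5 : (a1 + a2 + a3 + a4 + a5 = k)%nat ->
  A a1 a2 a3 a4 a5 = swap5 A a1 a2 a3 a4 a5.
Proof.
  intro Hs.
  pose proof (swap5_eq k rescale (fun b => 4 / c b)
    rescale_shift34 rescale_shift51 rescale_shift31 a1 a2 a3 a4 a5 Hs) as Hsym.
  unfold swap5, rescale in Hsym |- *.
  replace (mass a3 a2 a1 a5 a4) with (mass a1 a2 a3 a4 a5) in Hsym by (unfold mass; ring).
  apply Rmult_eq_reg_r with (1 := Hsym), mass_neq0, Hs.
Qed.

End Rescaling.

Lemma coef_pos n k a : (2 * k < n)%nat -> (a < k)%nat -> 0 < coef n k a.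
Proof.
  intros Hn Ha; unfold coef.
  assert (Hlt : (4 * a + 4 < n + 2 * k)%nat) by lia.
  apply lt_INR in Hlt; rewrite !plus_INR, !mult_INR in Hlt; simpl in Hlt; lra.
Qed.

Theorem lemma4p3 (n k : nat) (A : F5) :
  (2 * k < n)%nat ->
  (forall a1 a2 a3 a4 a5 : nat, (a1 + a2 + a3 + a4 + a5 + 1 = k)%nat ->
     coef n k a3 * A a1 a2 (S a3) a4 a5 = coef n k a4 * A a1 a2 a3 (S a4) a5 /\
     coef n k a5 * A a1 a2 a3 a4 (S a5) = coef n k a1 * A (S a1) a2 a3 a4 a5 /\
     coef n k a3 * A a1 a2 (S a3) a4 a5 =
       coef n k a1 * A (S a1) a2 a3 a4 a5
       - 4 * (INR a1 - INR a3 - INR a4 + INR a5) * A a1 (S a2) a3 a4 a5) ->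
  forall a1 a2 a3 a4 a5 : nat, (a1 + a2 + a3 + a4 + a5 = k)%nat -> a4 = a5 ->
    A a1 a2 a3 a4 a5 = A a3 a2 a1 a5 a4.
Proof.
  intros Hn Hrel a1 a2 a3 a4 a5 Hs _.
  apply (swap5_eq_of_rel k (coef n k) A); [|exact Hrel|exact Hs].
  intros b Hb; apply Rgt_not_eq, coef_pos; assumption.
Qed.
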